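(* Suppose $\sigma$ is an automorphism of $D$ and $f(t)=t^m-a\in D[t;\sigma]$ with $a\in D$. Then $f$ has a left divisor of degree $1$ if and only if it has a right divisor of degree $1$.
   Context: $D$ is an associative division ring, $\sigma$ a ring automorphism of $D$, and $D[t;\sigma]$ the skew polynomial ring with $ta=\sigma(a)t$. A left (resp. right) divisor $g$ of $f$ means $f=gq$ (resp. $f=qg$) for some $q\in D[t;\sigma]$. *)

From HB Require Import structures.
From mathcomp Require Import all_boot all_order all_algebra.
Set Implicit Arguments. Unset Strict Implicit. Unset Printing Implicit Defensive.
Import GRing.Theory.
Local Open Scope ring_scope.

(* Skew polynomial ring D[t; sigma] with t a = sigma(a) t.
   Elements are represented by their coefficient sequences, reusing the
   additive structure of {poly D}: p = \sum_i p`_i t^i.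
   Skew multiplication: (p q)_k = \sum_{i+j=k} p_i sigma^i(q_j),
   since (p_i t^i)(q_j t^j) = p_i sigma^i(q_j) t^(i+j). *)

Definition is_division_ring (D : unitRingType) : Prop :=
  forall x : D, x != 0 -> x \is a GRing.unit.

Definition skew_mul (D : nzRingType) (sigma : D -> D) (p q : {poly D}) : {poly D} :=
  \poly_(k < size p + size q)
     \sum_(i < k.+1) p`_i * iter i sigma (q`_(k - i)).

Definition skew_left_divisor (D : nzRingType) (sigma : D -> D) (g f : {poly D}) : Prop :=
  exists h : {poly D}, f = skew_mul sigma g h.

Definition skew_right_divisor (D : nzRingType) (sigma : D -> D) (g f : {poly D}) : Prop :=
  exists h : {poly D}, f = skew_mul sigma h g.

From HB Require Import structures.
From mathcomp Require Import all_boot all_order all_algebra zify.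
Set Implicit Arguments. Unset Strict Implicit. Unset Printing Implicit Defensive.
Import GRing.Theory.
Local Open Scope ring_scope.

(* A divisor of degree one has a unit leading coefficient, so it can be
   replaced by a monic one, t - b.  With the norm
   N_m(b) = sigma^(m-1)(b) ... sigma(b) b, the polynomial t - b right-divides
   t^m - a iff N_m(b) = a, while if t - c left-divides it then
   N_m(c) = sigma^(m-1)(a), and conversely t - sigma^(m-1)(b) left-divides it
   when N_m(b) = a.  Since sigma^(m-1)(N_m b) = N_m(sigma^(m-1) b) and sigma is
   bijective, b and c = sigma^(m-1)(b) correspond. *)

Lemma iter_bij (T : Type) (f : T -> T) n : bijective f -> bijective (iter n f).
Proof.
move=> bij_f; elim: n => [|n IH]; first by exists id.
by apply: (eq_bij (bij_comp bij_f IH)) => x.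
Qed.

Lemma downward_ind_ge (P : nat -> Prop) m K :
  (forall k, (K <= k)%N -> P k) -> (forall k, (m <= k)%N -> P k.+1 -> P k) ->
  forall k, (m <= k)%N -> P k.
Proof.
move=> PK PS k; have [n] := ubnP (K - k); elim: n k => // n IH k ltKn le_mk.
have [/PK//|ltkK] := leqP K k.
by apply: PS => //; apply: IH; lia.
Qed.

Lemma coef_poly_size (R : nzRingType) (F : nat -> R -> R) (h : {poly R}) k :
  F k 0 = 0 -> (\poly_(i < size h) F i h`_i)`_k = F k h`_k.
Proof.
by move=> F0; rewrite coef_poly; case: ltnP => // /(nth_default 0) ->.
Qed.

Lemma coef0_XnsubC (R : nzRingType) m (a : R) :
  ('X^m - a%:P)`_0 = (0 == m)%:R - a.
Proof. by rewrite coefB coefXn coefC. Qed.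

Lemma coefS_XnsubC (R : nzRingType) m (a : R) k :
  ('X^m - a%:P)`_k.+1 = (k.+1 == m)%:R.
Proof. by rewrite coefB coefXn coefC subr0. Qed.

Lemma coef0_XsubC (R : nzRingType) (b : R) : ('X - b%:P)`_0 = - b.
Proof. by rewrite polyseqXsubC. Qed.

Lemma coef1_XsubC (R : nzRingType) (b : R) : ('X - b%:P)`_1 = 1.
Proof. by rewrite polyseqXsubC. Qed.

Section IterRMorphism.
Variables (R : nzRingType) (s : {rmorphism R -> R}) (n : nat).

Fact iter_is_zmod_morphism : zmod_morphism (iter n s).
Proof. by elim: n => // n' IH x y /=; rewrite IH rmorphB. Qed.

Fact iter_is_monoid_morphism : monoid_morphism (iter n s).
Proof.
split; first by elim: n => //= n' ->; rewrite rmorph1.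
by elim: n => // n' IH x y /=; rewrite IH rmorphM.
Qed.

HB.instance Definition _ :=
  GRing.isZmodMorphism.Build R R (iter n s) iter_is_zmod_morphism.
HB.instance Definition _ :=
  GRing.isMonoidMorphism.Build R R (iter n s) iter_is_monoid_morphism.

End IterRMorphism.

Section SkewMulCoef.
Variables (R : nzRingType) (s : {rmorphism R -> R}).

Lemma coef_skew_mul (p q : {poly R}) k :
  (skew_mul s p q)`_k = \sum_(i < k.+1) p`_i * iter i s q`_(k - i).
Proof.
rewrite coef_poly; case: ltnP => // le_pq_k; rewrite big1 // => i _.
have [lt_ip|le_pi] := ltnP i (size p); last by rewrite nth_default ?mul0r.
by rewrite (nth_default 0 (_ : size q <= k - i)%N) ?rmorph0 ?mulr0 //; lia.
Qed.

Lemma coef0_skew_mul (p q : {poly R}) : (skew_mul s p q)`_0 = p`_0 * q`_0.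
Proof. by rewrite coef_skew_mul big_ord1. Qed.

Lemma coefS_skew_mul_deg1r (h g : {poly R}) k : (size g <= 2)%N ->
  (skew_mul s h g)`_k.+1 = h`_k.+1 * iter k.+1 s g`_0 + h`_k * iter k s g`_1.
Proof.
move=> sz_g; rewrite coef_skew_mul !big_ord_recr /= subnn subSnn big1 ?add0r.
  by rewrite addrC.
move=> i _; rewrite (nth_default 0 (_ : size g <= _)%N) ?rmorph0 ?mulr0 //.
by have := ltn_ord i; lia.
Qed.

Lemma coefS_skew_mul_deg1l (g h : {poly R}) k : (size g <= 2)%N ->
  (skew_mul s g h)`_k.+1 = g`_0 * h`_k.+1 + g`_1 * s h`_k.
Proof.
move=> sz_g; rewrite coef_skew_mul !big_ord_recl /= subn0 subSS subn0.
rewrite big1 ?addr0 // => i _.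
by rewrite nth_default ?mul0r //; apply: leq_trans sz_g _.
Qed.

End SkewMulCoef.

Section MonicLinearDivisor.
Variables (D : unitRingType) (s : {rmorphism D -> D}) (f g : {poly D}).
Hypotheses (hD : is_division_ring D) (sz_g : size g = 2%N).

Let g1_unit : g`_1 \is a GRing.unit.
Proof.
apply: hD; have : lead_coef g != 0 by rewrite lead_coef_eq0 -size_poly_eq0 sz_g.
by rewrite lead_coefE sz_g.
Qed.

Lemma skew_right_divisor_XsubC_of_size2 :
  skew_right_divisor s g f -> exists b, skew_right_divisor s ('X - b%:P) f.
Proof.
move=> [h ->]; exists (- ((g`_1)^-1 * g`_0)).
pose F k x := x * iter k s g`_1; exists (\poly_(k < size h) F k h`_k).
apply/polyP => -[|k].
  rewrite !coef0_skew_mul coef_poly_size /F ?mul0r // coef0_XsubC opprK -mulrA.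
  by congr (_ * _); exact/esym/mulVKr.
rewrite !coefS_skew_mul_deg1r ?sz_g ?size_XsubC // !coef_poly_size /F ?mul0r //.
rewrite coef0_XsubC coef1_XsubC opprK rmorph1 mulr1 -mulrA -rmorphM.
by congr (_ * iter k.+1 s _ + _); exact/esym/mulVKr.
Qed.

Lemma skew_left_divisor_XsubC_of_size2 : bijective s ->
  skew_left_divisor s g f -> exists c, skew_left_divisor s ('X - c%:P) f.
Proof.
move=> [sinv _ sinvK] [h ->]; set e := sinv g`_1.
have se : s e = g`_1 by rewrite sinvK.
have e_unit : e \is a GRing.unit.
  by apply: hD; apply: contraTneq g1_unit => e0; rewrite -se e0 rmorph0 unitr0.
exists (- (g`_0 * e^-1)), (e *: h).
apply/polyP => -[|k].
  by rewrite !coef0_skew_mul coefZ coef0_XsubC opprK -mulrA mulKr.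
rewrite !coefS_skew_mul_deg1l ?sz_g ?size_XsubC // !coefZ.
by rewrite coef0_XsubC coef1_XsubC opprK mul1r rmorphM se -mulrA mulKr.
Qed.

End MonicLinearDivisor.

Section SkewNorm.
Variables (R : nzRingType) (s : {rmorphism R -> R}).

Fixpoint skew_norm n b :=
  if n is n'.+1 then iter n' s b * skew_norm n' b else 1.

Lemma skew_normS n b : skew_norm n.+1 b = iter n s b * skew_norm n b.
Proof. by []. Qed.

Lemma skew_normSr n b : skew_norm n.+1 b = skew_norm n (s b) * b.
Proof.
elim: n => [|n IH]; first by rewrite /= mul1r mulr1.
by rewrite skew_normS IH mulrA skew_normS iterSr.
Qed.

Lemma rmorph_skew_norm (phi : {rmorphism R -> R}) n b :
  (forall x, phi (s x) = s (phi x)) ->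
  phi (skew_norm n b) = skew_norm n (phi b).
Proof.
move=> phi_s; elim: n => [|n IH] /=; first exact: rmorph1.
by rewrite rmorphM IH; congr (_ * _); elim: n {IH} => //= n <-.
Qed.

End SkewNorm.

Section LinearDivisorsOfBinomial.
Variables (R : nzRingType) (s : {rmorphism R -> R}) (m : nat) (a : R).

Lemma skew_right_divisor_XsubC_of_norm b :
  skew_norm s m b = a -> skew_right_divisor s ('X - b%:P) ('X^m - a%:P).
Proof.
move=> <-; exists (\poly_(k < m) skew_norm s (m.-1 - k) (iter k.+1 s b)).
apply/polyP => -[|k].
  rewrite coef0_XnsubC coef0_skew_mul coef_poly coef0_XsubC mulrN.
  by case: m => [|n]; rewrite ?subrr ?mul0r ?oppr0 // sub0r subn0 -skew_normSr.
rewrite coefS_XnsubC coefS_skew_mul_deg1r ?size_XsubC // !coef_poly.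
rewrite coef0_XsubC coef1_XsubC rmorph1 mulr1 rmorphN mulrN.
case: (ltngtP k.+1 m) => [lt_km|_|<-].
- rewrite (_ : m.-1 - k = (m.-1 - k.+1).+1)%N; last by lia.
  by rewrite skew_normSr addNr.
- by rewrite mul0r oppr0 addr0.
- by rewrite mul0r oppr0 add0r subnn.
Qed.

Lemma skew_norm_of_right_divisor_XsubC b :
  skew_right_divisor s ('X - b%:P) ('X^m - a%:P) -> skew_norm s m b = a.
Proof.
move=> [h f_eq].
have coef0 : (0 == m)%:R - a = - (h`_0 * b).
  by rewrite -coef0_XnsubC f_eq coef0_skew_mul coef0_XsubC mulrN.
have coefS k : (k.+1 == m)%:R = h`_k - h`_k.+1 * iter k.+1 s b.
  rewrite -(coefS_XnsubC m a) f_eq coefS_skew_mul_deg1r ?size_XsubC //.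
  by rewrite coef0_XsubC coef1_XsubC rmorph1 mulr1 rmorphN mulrN addrC.
have h_ge_m : forall k, (m <= k)%N -> h`_k = 0.
  apply: (downward_ind_ge (K := size h)) => [k /(nth_default 0)//|k le_mk hk1].
  have := coefS k; rewrite hk1 mul0r subr0 => <-.
  by rewrite (_ : (k.+1 == m) = false) //; lia.
case: m coef0 coefS h_ge_m => [|n] coef0 coefS h_ge_m.
  by move/eqP: coef0; rewrite h_ge_m // mul0r oppr0 subr_eq0 => /eqP.
have h_quot j : (j <= n)%N -> h`_(n - j) = skew_norm s j (iter (n - j).+1 s b).
  elim: j => [_|j IH lt_jn].
    by have := coefS n; rewrite eqxx (h_ge_m n.+1) // mul0r subr0 subn0 => <-.
  have := coefS (n - j.+1)%N.
  rewrite (_ : (n - j.+1).+1 = n - j)%N; last by lia.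
  rewrite (_ : (n - j == n.+1)%N = false); last by lia.
  move/eqP; rewrite eq_sym subr_eq0 IH ?(ltnW lt_jn) // => /eqP ->.
  by rewrite skew_normSr -iterS (_ : (n - j = (n - j.+1).+1))%N //; lia.
have h0 : h`_0 = skew_norm s n (s b) by rewrite -[0%N](subnn n) h_quot // subnn.
by move: coef0; rewrite h0 -skew_normSr [(0 == _)%:R]/= sub0r => /oppr_inj.
Qed.

Lemma skew_left_divisor_XsubC_of_norm b :
  skew_norm s m b = a ->
  skew_left_divisor s ('X - (iter m.-1 s b)%:P) ('X^m - a%:P).
Proof.
move=> <-; exists (\poly_(k < m) skew_norm s (m.-1 - k) (iter k s b)).
apply/polyP => -[|k].
  rewrite coef0_XnsubC coef0_skew_mul coef_poly coef0_XsubC mulNr.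
  by case: m => [|n]; rewrite ?subrr ?mulr0 ?oppr0 // sub0r subn0 -skew_normS.
rewrite coefS_XnsubC coefS_skew_mul_deg1l ?size_XsubC // !coef_poly.
rewrite coef0_XsubC coef1_XsubC mul1r mulNr.
case: (ltngtP k.+1 m) => [lt_km|_|<-].
- rewrite (_ : m.-1 - k = (m.-1 - k.+1).+1)%N; last by lia.
  rewrite rmorph_skew_norm // skew_normS -iterS -iterD.
  by rewrite (_ : m.-1 - k.+1 + k.+1 = m.-1)%N ?addNr //; lia.
- by rewrite mulr0 oppr0 add0r (rmorph0 s).
- by rewrite mulr0 oppr0 add0r succnK subnn (rmorph1 s).
Qed.

Lemma skew_norm_of_left_divisor_XsubC c : injective s ->
  skew_left_divisor s ('X - c%:P) ('X^m - a%:P) ->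
  skew_norm s m c = iter m.-1 s a.
Proof.
move=> s_inj [h f_eq].
have coef0 : (0 == m)%:R - a = - (c * h`_0).
  by rewrite -coef0_XnsubC f_eq coef0_skew_mul coef0_XsubC mulNr.
have coefS k : (k.+1 == m)%:R = s h`_k - c * h`_k.+1.
  rewrite -(coefS_XnsubC m a) f_eq coefS_skew_mul_deg1l ?size_XsubC //.
  by rewrite coef0_XsubC coef1_XsubC mul1r mulNr addrC.
have h_ge_m : forall k, (m <= k)%N -> h`_k = 0.
  apply: (downward_ind_ge (K := size h)) => [k /(nth_default 0)//|k le_mk hk1].
  apply: s_inj; rewrite rmorph0; have := coefS k; rewrite hk1 mulr0 subr0 => <-.
  by rewrite (_ : (k.+1 == m) = false) //; lia.
case: m coef0 coefS h_ge_m => [|n] coef0 coefS h_ge_m.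
  by move/eqP: coef0; rewrite h_ge_m // mulr0 oppr0 subr_eq0 => /eqP.
have h_quot j : (j <= n)%N -> iter j s h`_(n - j) = skew_norm s j c.
  elim: j => [_|j IH lt_jn].
    apply: s_inj; rewrite subn0 -[skew_norm s 0 c]/1 (rmorph1 s).
    by have := coefS n; rewrite eqxx (h_ge_m n.+1) // mulr0 subr0 => <-.
  have := coefS (n - j.+1)%N.
  rewrite (_ : (n - j.+1).+1 = n - j)%N; last by lia.
  rewrite (_ : (n - j == n.+1)%N = false); last by lia.
  move/eqP; rewrite eq_sym subr_eq0 => /eqP s_h.
  by rewrite iterSr s_h rmorphM /= IH 1?ltnW.
have h0 : iter n s h`_0 = skew_norm s n c by rewrite -[0%N](subnn n) h_quot.
move: coef0; rewrite [(0 == _)%:R]/= sub0r => /oppr_inj ->.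
by rewrite rmorphM /= h0.
Qed.

End LinearDivisorsOfBinomial.

Theorem mainTheorem13 (D : unitRingType) (hD : is_division_ring D)
  (sigma : {rmorphism D -> D}) (hsigma : bijective sigma)
  (m : nat) (a : D) :
  let f : {poly D} := 'X^m - a%:P in
  (exists g : {poly D}, size g = 2%N /\ skew_left_divisor sigma g f) <->
  (exists g : {poly D}, size g = 2%N /\ skew_right_divisor sigma g f).
Proof.
move=> f; split=> -[g [sz_g g_div]].
- have [c /(skew_norm_of_left_divisor_XsubC (bij_inj hsigma)) norm_c] :=
    skew_left_divisor_XsubC_of_size2 hD sz_g hsigma g_div.
  have [inv_iter iterK inv_iterK] := iter_bij m.-1 hsigma.
  exists ('X - (inv_iter c)%:P); split; first exact: size_XsubC.
  apply/skew_right_divisor_XsubC_of_norm/(can_inj iterK).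
  rewrite rmorph_skew_norm => [|x]; last by rewrite /= -iterSr iterS.
  by rewrite /= inv_iterK.
- have [b /skew_norm_of_right_divisor_XsubC norm_b] :=
    skew_right_divisor_XsubC_of_size2 hD sz_g g_div.
  exists ('X - (iter m.-1 sigma b)%:P); split; first exact: size_XsubC.
  exact: skew_left_divisor_XsubC_of_norm.
Qed.
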